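(* For every target rate $r>0$, $P_{\rm r}>0$ and $\mathcal C_x\in[0,1)$, \[ \mathcal P_{\rm E-E}(P_{\rm r},\mathcal C_x)\ge 1-\frac{e^{-\Psi_r(\mathcal C_x)\left(\frac1{P_{\rm s}\theta_{\rm sr}}+\frac1{P_{\rm r}\theta_{\rm rd}(1-\mathcal C_x^2)}\right)}}{\Gamma(m_{\rm sd})\Gamma(m_{\rm rr})\theta_{\rm sd}^{m_{\rm sd}}\theta_{\rm rr}^{m_{\rm rr}}}\sum_{m=0}^{m_{\rm sr}-1}\sum_{m'=0}^{m_{\rm rd}-1}\sum_{k=0}^m\sum_{k'=0}^{m'}\binom mk\binom{m'}{k'} \frac{\dfrac{P_{\rm r}^{k-m'}\Gamma(k+m_{\rm rr})\Gamma(k'+m_{\rm sd})\Psi_r(\mathcal C_x)^{m+m'}}{P_{\rm s}^{m-k'}\Gamma(m+1)\Gamma(m'+1)\theta_{\rm sr}^m\theta_{\rm rd}^{m'}(1-\mathcal C_x^2)^{m'}}}{\left(\frac{P_{\rm r}\Psi_r(\mathcal C_x)}{P_{\rm s}\theta_{\rm sr}}+\frac1{\theta_{\rm rr}}\right)^{k+m_{\rm rr}}\left(\frac{P_{\rm s}\Psi_r(\mathcal C_x)}{P_{\rm r}\theta_{\rm rd}(1-\mathcal C_x^2)}+\frac1{\theta_{\rm sd}}\right)^{k'+m_{\rm sd}}}=:\mathcal P^{\rm LB}_{\rm E-E}(P_{\rm r},\mathcal C_x). \]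
   Context: Let $P_{\rm s}>0$, $P_{\rm r}>0$ be the source and relay transmit powers. For links $ij\in\{\mathrm{sr},\mathrm{rr},\mathrm{rd},\mathrm{sd}\}$ let $g_{ij}$ be mutually independent random channel gains, $g_{ij}$ gamma distributed with integer shape parameter $m_{ij}\ge1$ and scale $\theta_{ij}=\pi_{ij}/m_{ij}$, where $\pi_{ij}=\mathbb E[g_{ij}]>0$; i.e. $g_{ij}$ has density $x^{m_{ij}-1}e^{-x/\theta_{ij}}/(\Gamma(m_{ij})\theta_{ij}^{m_{ij}})$ for $x\ge0$. For a circularity coefficient $\mathcal C_x\in[0,1)$ define $R_{\rm sr}(P_{\rm r},\mathcal C_x)=\tfrac12\log_2\frac{(P_{\rm s}g_{\rm sr}+P_{\rm r}g_{\rm rr}+1)^2-(P_{\rm r}g_{\rm rr}\mathcal C_x)^2}{(P_{\rm r}g_{\rm rr}+1)^2-(P_{\rm r}g_{\rm rr}\mathcal C_x)^2}$ and $R_{\rm rd}(P_{\rm r},\mathcal C_x)=\tfrac12\log_2\frac{(P_{\rm r}g_{\rm rd}+P_{\rm s}g_{\rm sd}+1)^2-(P_{\rm r}g_{\rm rd}\mathcal C_x)^2}{(P_{\rm s}g_{\rm sd}+1)^2}$. For a target rate $r>0$ put $\gamma=2^{2r}-1$, $\eta=2^r-1$ and $\Psi_r(x)=\sqrt{1+\gamma(1-x^2)}-1$. The outage probabilities are $\mathcal P_{\rm sr}=\mathbb P\{R_{\rm sr}<r\}$, $\mathcal P_{\rm rd}=\mathbb P\{R_{\rm rd}<r\}$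 and $\mathcal P_{\rm E-E}=\mathbb P\{\min(R_{\rm sr},R_{\rm rd})<r\}$. *)

From Stdlib Require Import Reals Lra Factorial.
Open Scope R_scope.

Definition Gam (n : nat) : R := INR (Factorial.fact (pred n)).

Definition log2 (x : R) : R := ln x / ln 2.

Definition theta (pi : R) (m : nat) : R := pi / INR m.

(* gamma density with integer shape m and scale th, on x >= 0 *)
Definition gamma_pdf (m : nat) (th x : R) : R :=
  x ^ (pred m) * exp (- x / th) / (Gam m * th ^ m).

Definition R_sr (Ps Pr Cx gsr grr : R) : R :=
  / 2 * log2 (((Ps * gsr + Pr * grr + 1) ^ 2 - (Pr * grr * Cx) ^ 2)
              / ((Pr * grr + 1) ^ 2 - (Pr * grr * Cx) ^ 2)).

Definition R_rd (Ps Pr Cx grd gsd : R) : R :=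
  / 2 * log2 (((Pr * grd + Ps * gsd + 1) ^ 2 - (Pr * grd * Cx) ^ 2)
              / (Ps * gsd + 1) ^ 2).

Definition ImprInt0 (f : R -> R) (L : R) : Prop :=
  forall eps, 0 < eps -> exists M, forall b, M <= b ->
    exists pr : Riemann_integrable f 0 b, Rabs (RiemannInt pr - L) < eps.

Definition IterInt4 (h : R -> R -> R -> R -> R) (P : R) : Prop :=
  exists F1 : R -> R, ImprInt0 F1 P /\
  forall x1, 0 <= x1 -> exists F2 : R -> R, ImprInt0 F2 (F1 x1) /\
  forall x2, 0 <= x2 -> exists F3 : R -> R, ImprInt0 F3 (F2 x2) /\
  forall x3, 0 <= x3 -> ImprInt0 (fun x4 => h x1 x2 x3 x4) (F3 x3).

(* indicator of min(R_sr, R_rd) < r, times the joint density of the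
   independent gains (g_sr, g_rr, g_rd, g_sd) *)
Definition outage_integrand (Ps Pr Cx r : R)
    (msr mrr mrd msd : nat) (pisr pirr pird pisd : R)
    (gsr grr grd gsd : R) : R :=
  (if Rlt_dec (Rmin (R_sr Ps Pr Cx gsr grr) (R_rd Ps Pr Cx grd gsd)) r
   then 1 else 0)
  * gamma_pdf msr (theta pisr msr) gsr
  * gamma_pdf mrr (theta pirr mrr) grr
  * gamma_pdf mrd (theta pird mrd) grd
  * gamma_pdf msd (theta pisd msd) gsd.

Definition is_P_EE (Ps Pr Cx r : R) (msr mrr mrd msd : nat)
    (pisr pirr pird pisd : R) (P : R) : Prop :=
  IterInt4 (outage_integrand Ps Pr Cx r msr mrr mrd msd pisr pirr pird pisd) P.

Definition gam_r (r : R) : R := Rpower 2 (2 * r) - 1.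
Definition Psi (r x : R) : R := sqrt (1 + gam_r r * (1 - x ^ 2)) - 1.

Definition P_EE_LB (Ps Pr Cx r : R) (msr mrr mrd msd : nat)
    (pisr pirr pird pisd : R) : R :=
  let tsr := theta pisr msr in let trr := theta pirr mrr in
  let trd := theta pird mrd in let tsd := theta pisd msd in
  let ps := Psi r Cx in let c2 := 1 - Cx ^ 2 in
  1 - exp (- ps * (1 / (Ps * tsr) + 1 / (Pr * trd * c2)))
      / (Gam msd * Gam mrr * tsd ^ msd * trr ^ mrr)
    * sum_f_R0 (fun m =>
       sum_f_R0 (fun m' =>
        sum_f_R0 (fun k =>
         sum_f_R0 (fun k' =>
           Binomial.C m k * Binomial.C m' k' *
           ((powerRZ Pr (Z.of_nat k - Z.of_nat m')%Z * Gam (k + mrr)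
               * Gam (k' + msd) * ps ^ (m + m'))
            / (powerRZ Ps (Z.of_nat m - Z.of_nat k')%Z * Gam (m + 1)
               * Gam (m' + 1) * tsr ^ m * trd ^ m' * c2 ^ m'))
           / ((Pr * ps / (Ps * tsr) + 1 / trr) ^ (k + mrr)
              * (Ps * ps / (Pr * trd * c2) + 1 / tsd) ^ (k' + msd)))
         m') m) (pred mrd)) (pred msr).

(* Both rate conditions are thresholds on a single gain: [R_rd < r] iff
   [g_sd > al_rd g_rd - be_rd], with [al_rd = P_r (1 - C_x^2) / (Psi P_s)] and
   [be_rd = 1 / P_s], and [R_sr < r] iff [g_rr > tau(P_s g_sr) / P_r], where [tau] is
   the larger root of a quadratic.  Integrating out the gains one at a time gives
     [P_E-E = 1 - P(g_sd <= al_rd g_rd - be_rd) * P(g_rr <= tau(P_s g_sr) / P_r)].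
   Since [tau(x) <= x / Psi - 1], the last factor is at most [P(g_rr <= al_sr g_sr - be_sr)]
   with [al_sr = P_s / (Psi P_r)] and [be_sr = 1 / P_r].  For independent Erlang variables,
   [P(Y <= al X - be) = E[P(X > (Y + be) / al | Y)]]; expanding the Erlang survival function
   of [X] and the binomial [(Y + be)^j] turns the integrand into a finite mixture of gamma
   densities, so this probability is a finite double sum.  The product of the two double
   sums is exactly [1 - P^LB_E-E]. *)

From Stdlib Require Import Reals Lra Lia Psatz Factorial Binomial.
From Coquelicot Require Import Coquelicot.
Open Scope R_scope.

Lemma ex_derive_continuous_R (f : R -> R) x : ex_derive f x -> continuous f x.
Proof. apply (ex_derive_continuous (K := R_AbsRing) (V := R_NormedModule)). Qed.

Lemma continuous_Rmax0_comp (f : R -> R) x :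
  continuous f x -> continuous (fun t => Rmax 0 (f t)) x.
Proof.
  intros Hf.
  assert (Hmax : forall y, (y + Rabs y) * / 2 = Rmax 0 y).
  { intros y. unfold Rmax. destruct (Rle_dec 0 y).
    - rewrite Rabs_right by lra. field.
    - rewrite Rabs_left by lra. field. }
  apply (continuous_ext (fun t => (f t + Rabs (f t)) * / 2)); [intros t; apply Hmax|].
  apply (continuous_mult (U := R_UniformSpace) (K := R_AbsRing));
    [| apply continuous_const].
  apply (continuous_plus (U := R_UniformSpace) (K := R_AbsRing) (V := R_NormedModule));
    [exact Hf | apply continuous_Rabs_comp, Hf].
Qed.

Lemma is_lim_scal_l' (f : R -> R) (x : Rbar) (a l : R) :
  is_lim f x l -> is_lim (fun y => a * f y) x (a * l).
Proof. exact (is_lim_scal_l f a x l). Qed.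

Lemma is_lim_inv_pinfty c : is_lim (fun t => c / t) p_infty 0.
Proof.
  replace (Finite 0) with (Rbar_mult c (Rbar_inv p_infty)) by (simpl; f_equal; ring).
  apply is_lim_scal_l, is_lim_inv; [apply is_lim_id | discriminate].
Qed.

Lemma is_lim_affine_pinfty al be : 0 < al -> is_lim (fun x => al * x - be) p_infty p_infty.
Proof.
  intros Hal. apply is_lim_spec. intros M. exists ((M + be) / al). intros x Hx.
  apply (Rmult_lt_compat_l al) in Hx; [|lra].
  replace (al * ((M + be) / al)) with (M + be) in Hx by (field; lra). lra.
Qed.

Lemma is_lim_sum (f : nat -> R -> R) (l : nat -> R) (x : Rbar) n :
  (forall i, (i <= n)%nat -> is_lim (f i) x (l i)) ->
  is_lim (fun t => sum_f_R0 (fun i => f i t) n) x (sum_f_R0 l n).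
Proof.
  induction n as [|n IH]; intros H; simpl; [apply H; lia|].
  apply is_lim_plus'; [apply IH; intros; apply H | apply H]; lia.
Qed.

Lemma is_RInt_sum (f : nat -> R -> R) (l : nat -> R) a b n :
  (forall i, (i <= n)%nat -> is_RInt (f i) a b (l i)) ->
  is_RInt (fun t => sum_f_R0 (fun i => f i t) n) a b (sum_f_R0 l n).
Proof.
  induction n as [|n IH]; intros H; simpl; [apply H; lia|].
  apply (is_RInt_plus (fun t => sum_f_R0 (fun i => f i t) n) (f (S n)));
    [apply IH; intros; apply H | apply H]; lia.
Qed.

Lemma is_lim_incr_bounded (I : R -> R) a B :
  (forall s t, a <= s <= t -> I s <= I t) -> (forall t, a <= t -> I t <= B) ->
  exists L : R, is_lim I p_infty L.
Proof.
  intros Hincr Hbnd.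
  set (E := fun y => exists t, a <= t /\ y = I t).
  destruct (completeness E) as [L [Hub Hlub]].
  - exists B. intros y [t [Ht ->]]. auto.
  - exists (I a), a. split; [lra | auto].
  - exists L. apply is_lim_spec. intros eps.
    assert (Hnear : exists t0, a <= t0 /\ L - eps < I t0).
    { apply Classical_Prop.NNPP. intros Hno.
      assert (L <= L - eps); [|pose proof (cond_pos eps); lra].
      apply Hlub. intros y [t [Ht ->]].
      apply Rnot_lt_le. intros Hlt. apply Hno. exists t. auto. }
    destruct Hnear as [t0 [Ht0 Hlt]].
    exists t0. intros t Ht.
    assert (I t <= L) by (apply Hub; exists t; split; [lra | auto]).
    assert (I t0 <= I t) by (apply Hincr; lra).
    apply Rabs_def1; lra.
Qed.

Lemma ImprInt0_of_is_lim (f I : R -> R) (L : R) :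
  Rbar_locally p_infty (fun b => is_RInt f 0 b (I b)) -> is_lim I p_infty L ->
  ImprInt0 f L.
Proof.
  intros [M HM] HL eps Heps. apply is_lim_spec in HL.
  destruct (HL (mkposreal eps Heps)) as [M' HM'].
  exists (Rmax M M' + 1). intros b Hb.
  pose proof (Rmax_l M M'). pose proof (Rmax_r M M').
  assert (Hi : is_RInt f 0 b (I b)) by (apply HM; lra).
  exists (ex_RInt_Reals_0 _ _ _ (ex_intro _ _ Hi)).
  rewrite <- RInt_Reals, (is_RInt_unique _ _ _ _ Hi). apply HM'. lra.
Qed.

(** * The Erlang distribution *)

Definition exp_partial_sum (n : nat) (u : R) : R :=
  sum_f_R0 (fun j => u ^ j / INR (fact j)) n.

(* For [t >= 0] and [m >= 1] this is [P(X > t)] for [X ~ Gamma(m, th)]; for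
   [t < 0] it is not a probability, hence the clamp in [gamma_cdf] below. *)
Definition gamma_tail (m : nat) (th t : R) : R :=
  exp (- t / th) * exp_partial_sum (pred m) (t / th).

Definition gamma_cdf (m : nat) (th t : R) : R := 1 - gamma_tail m th (Rmax 0 t).

Lemma is_derive_exp_partial_sum n u :
  is_derive (exp_partial_sum n) u (exp_partial_sum n u - u ^ n / INR (fact n)).
Proof.
  revert u; induction n as [|n IH]; intro u.
  - unfold exp_partial_sum; simpl. auto_derive; [exact I | lra].
  - apply is_derive_ext with
      (fun u => exp_partial_sum n u + u ^ S n / INR (fact (S n))); [reflexivity|].
    auto_derive; [eexists; apply IH|].
    change (Derive (fun x => exp_partial_sum n x) u) with (Derive (exp_partial_sum n) u).
    rewrite (is_derive_unique _ _ _ (IH u)).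
    change (exp_partial_sum (S n) u)
      with (exp_partial_sum n u + u ^ S n / INR (fact (S n))).
    change (match n with 0%nat => 1 | S _ => INR n + 1 end) with (INR (S n)).
    change (fact n + n * fact n)%nat with (fact (S n)).
    rewrite fact_simpl, mult_INR.
    pose proof (INR_fact_neq_0 n). pose proof (lt_0_INR (S n) (Nat.lt_0_succ n)).
    simpl pow. field. lra.
Qed.

Lemma is_derive_gamma_tail m th t : (1 <= m)%nat -> 0 < th ->
  is_derive (gamma_tail m th) t (- gamma_pdf m th t).
Proof.
  intros Hm Hth. destruct m as [|n]; [lia|].
  unfold gamma_tail. simpl pred.
  auto_derive; [eexists; apply is_derive_exp_partial_sum|].
  match goal with |- context [Derive ?f ?p] =>
    replace (Derive f p) with (exp_partial_sum n p - p ^ n / INR (fact n))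
      by (symmetry; apply is_derive_unique, is_derive_exp_partial_sum) end.
  unfold gamma_pdf, Gam. simpl pred.
  pose proof (INR_fact_neq_0 n). pose proof (pow_lt th n Hth).
  unfold Rdiv. rewrite Rpow_mult_distr, pow_inv. simpl. field. lra.
Qed.

Lemma ex_derive_gamma_tail m th t : (1 <= m)%nat -> 0 < th -> ex_derive (gamma_tail m th) t.
Proof. intros. eexists. apply is_derive_gamma_tail; auto. Qed.

Lemma ex_derive_gamma_pdf m th t : ex_derive (gamma_pdf m th) t.
Proof. unfold gamma_pdf. auto_derive. exact I. Qed.

Lemma gamma_tail_0 m th : 0 < th -> gamma_tail m th 0 = 1.
Proof.
  intros Hth. unfold gamma_tail, exp_partial_sum.
  replace (- 0 / th) with 0 by (field; lra). replace (0 / th) with 0 by (field; lra).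
  rewrite exp_0, Rmult_1_l.
  induction (pred m) as [|n IH]; [simpl; field|].
  simpl sum_f_R0. rewrite IH. simpl pow. unfold Rdiv. ring.
Qed.

Lemma continuous_gamma_pdf m th x : continuous (gamma_pdf m th) x.
Proof. apply ex_derive_continuous_R, ex_derive_gamma_pdf. Qed.

Lemma continuous_gamma_tail m th x : (1 <= m)%nat -> 0 < th ->
  continuous (gamma_tail m th) x.
Proof.
  intros. apply ex_derive_continuous_R, ex_derive_gamma_tail; auto.
Qed.

Lemma is_RInt_gamma_pdf m th a b : (1 <= m)%nat -> 0 < th ->
  is_RInt (gamma_pdf m th) a b (gamma_tail m th a - gamma_tail m th b).
Proof.
  intros Hm Hth.
  replace (gamma_tail m th a - gamma_tail m th b)
    with (minus (- gamma_tail m th b) (- gamma_tail m th a))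
    by (unfold minus, plus, opp; simpl; ring).
  apply (is_RInt_derive (fun t => - gamma_tail m th t)).
  - intros x _. auto_derive; [eexists; apply is_derive_gamma_tail; auto|].
    match goal with |- context [Derive ?f ?p] =>
      replace (Derive f p) with (- gamma_pdf m th p)
        by (symmetry; apply is_derive_unique, is_derive_gamma_tail; auto) end.
    ring.
  - intros x _. apply continuous_gamma_pdf.
Qed.

Lemma gamma_pdf_ge0 m th x : 0 < th -> 0 <= x -> 0 <= gamma_pdf m th x.
Proof.
  intros Hth Hx. unfold gamma_pdf, Gam.
  pose proof (lt_0_INR _ (lt_O_fact (pred m))). pose proof (pow_lt th m Hth).
  pose proof (exp_pos (- x / th)). pose proof (pow_le x (pred m) Hx).
  apply Rmult_le_pos; [nra|]. left. apply Rinv_0_lt_compat. nra.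
Qed.

Lemma exp_partial_sum_ge0 n u : 0 <= u -> 0 <= exp_partial_sum n u.
Proof.
  intros Hu. apply cond_pos_sum. intros j.
  apply Rdiv_le_0_compat; [apply pow_le; auto | apply lt_0_INR, lt_O_fact].
Qed.

Lemma gamma_tail_ge0 m th t : 0 < th -> 0 <= t -> 0 <= gamma_tail m th t.
Proof.
  intros Hth Ht. unfold gamma_tail. apply Rmult_le_pos; [left; apply exp_pos|].
  apply exp_partial_sum_ge0, Rdiv_le_0_compat; lra.
Qed.

Lemma gamma_tail_antitone m th s t : (1 <= m)%nat -> 0 < th -> 0 <= s <= t ->
  gamma_tail m th t <= gamma_tail m th s.
Proof.
  intros Hm Hth Hst.
  cut (0 <= gamma_tail m th s - gamma_tail m th t); [lra|].
  apply (is_RInt_ge_0 (gamma_pdf m th) s t); [lra | apply is_RInt_gamma_pdf; auto |].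
  intros x Hx. apply gamma_pdf_ge0; lra.
Qed.

Lemma gamma_tail_le1 m th t : (1 <= m)%nat -> 0 < th -> 0 <= t -> gamma_tail m th t <= 1.
Proof.
  intros. rewrite <- (gamma_tail_0 m th) by auto. apply gamma_tail_antitone; auto; lra.
Qed.

Lemma exp_neg_partial_sum_le1 n u : 0 <= u -> exp (- u) * exp_partial_sum n u <= 1.
Proof.
  intros Hu. pose proof (gamma_tail_le1 (S n) 1 u (le_n_S _ _ (Nat.le_0_l n)) Rlt_0_1 Hu) as H.
  unfold gamma_tail in H. simpl pred in H. rewrite !Rdiv_1_r in H. exact H.
Qed.

Lemma exp_neg_term_le j u : 0 < u -> exp (- u) * (u ^ j / INR (fact j)) <= INR (S j) / u.
Proof.
  intros Hu.
  (* [u / (j + 1)] times the [j]-th term is the next one, and the partial sums are [<= exp u]. *)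
  assert (Hterm : exp (- u) * (u ^ S j / INR (fact (S j))) <= 1).
  { eapply Rle_trans; [|apply (exp_neg_partial_sum_le1 (S j) u); lra].
    apply Rmult_le_compat_l; [left; apply exp_pos|].
    change (exp_partial_sum (S j) u) with (exp_partial_sum j u + u ^ S j / INR (fact (S j))).
    pose proof (exp_partial_sum_ge0 j u); lra. }
  rewrite fact_simpl, mult_INR in Hterm. simpl pow in Hterm.
  pose proof (INR_fact_neq_0 j). pose proof (lt_0_INR (S j) (Nat.lt_0_succ j)).
  apply (Rmult_le_reg_r (u / INR (S j))); [apply Rdiv_lt_0_compat; lra|].
  replace (INR (S j) / u * (u / INR (S j))) with 1 by (field; lra).
  eapply Rle_trans; [|apply Hterm]. right. field. lra.
Qed.

Lemma exp_neg_partial_sum_le n u : 0 < u ->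
  exp (- u) * exp_partial_sum n u <= INR (S n) * (INR (S n) / u).
Proof.
  intros Hu. unfold exp_partial_sum. rewrite scal_sum, Rmult_comm, <- sum_cte.
  apply sum_Rle. intros j Hj. rewrite Rmult_comm.
  eapply Rle_trans; [apply exp_neg_term_le; auto|].
  apply Rmult_le_compat_r; [left; apply Rinv_0_lt_compat; auto|].
  apply le_INR. lia.
Qed.

Lemma is_lim_gamma_tail m th : (1 <= m)%nat -> 0 < th ->
  is_lim (gamma_tail m th) p_infty 0.
Proof.
  intros Hm Hth. set (C := INR (S (pred m)) * INR (S (pred m))).
  apply (is_lim_le_le_loc (fun _ => 0) (fun t => C * th / t));
    [| apply is_lim_const | apply is_lim_inv_pinfty].
  exists 0. intros t Ht. split; [apply gamma_tail_ge0; lra|].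
  unfold gamma_tail. replace (- t / th) with (- (t / th)) by (field; lra).
  eapply Rle_trans; [apply exp_neg_partial_sum_le, Rdiv_lt_0_compat; lra|].
  right. unfold C. field. lra.
Qed.

Lemma gamma_cdf_of_nonneg m th t : 0 <= t -> gamma_cdf m th t = 1 - gamma_tail m th t.
Proof. intros Ht. unfold gamma_cdf. rewrite Rmax_right; auto. Qed.

Lemma gamma_cdf_of_nonpos m th t : 0 < th -> t <= 0 -> gamma_cdf m th t = 0.
Proof. intros Hth Ht. unfold gamma_cdf. rewrite Rmax_left, gamma_tail_0; auto; ring. Qed.

Lemma gamma_cdf_Rmax0 m th t : gamma_cdf m th (Rmax 0 t) = gamma_cdf m th t.
Proof. apply gamma_cdf_of_nonneg, Rmax_l. Qed.

Lemma gamma_cdf_bounds m th t : (1 <= m)%nat -> 0 < th -> 0 <= gamma_cdf m th t <= 1.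
Proof.
  intros Hm Hth. unfold gamma_cdf. pose proof (Rmax_l 0 t) as Ht.
  pose proof (gamma_tail_ge0 m th (Rmax 0 t) Hth Ht).
  pose proof (gamma_tail_le1 m th (Rmax 0 t) Hm Hth Ht). lra.
Qed.

Lemma gamma_cdf_le m th s t : (1 <= m)%nat -> 0 < th -> Rmax 0 s <= Rmax 0 t ->
  gamma_cdf m th s <= gamma_cdf m th t.
Proof.
  intros Hm Hth Hst. unfold gamma_cdf.
  pose proof (gamma_tail_antitone m th (Rmax 0 s) (Rmax 0 t) Hm Hth
                (conj (Rmax_l 0 s) Hst)). lra.
Qed.

Lemma continuous_gamma_cdf_comp m th (f : R -> R) x : (1 <= m)%nat -> 0 < th ->
  continuous f x -> continuous (fun t => gamma_cdf m th (f t)) x.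
Proof.
  intros Hm Hth Hf. unfold gamma_cdf.
  apply (continuous_minus (U := R_UniformSpace) (K := R_AbsRing) (V := R_NormedModule));
    [apply continuous_const|].
  apply (continuous_comp (fun t => Rmax 0 (f t)) (gamma_tail m th)).
  - apply continuous_Rmax0_comp, Hf.
  - apply continuous_gamma_tail; auto.
Qed.

Lemma ImprInt0_gamma_pdf_step m th T a b (h : R -> R) :
  (1 <= m)%nat -> 0 < th -> 0 <= T ->
  (forall x, 0 < x < T -> h x = a * gamma_pdf m th x) ->
  (forall x, T < x -> h x = b * gamma_pdf m th x) ->
  ImprInt0 h (a * gamma_cdf m th T + b * (1 - gamma_cdf m th T)).
Proof.
  intros Hm Hth HT Hbelow Habove.
  apply (ImprInt0_of_is_lim h (fun s => a * (gamma_tail m th 0 - gamma_tail m th T)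
                                      + b * (gamma_tail m th T - gamma_tail m th s))).
  - exists T. intros s Hs.
    apply (is_RInt_Chasles h 0 T s).
    + apply (is_RInt_ext (fun x => a * gamma_pdf m th x)).
      * intros x Hx. rewrite Rmin_left, Rmax_right in Hx by lra. symmetry; apply Hbelow; lra.
      * apply (is_RInt_scal (gamma_pdf m th)), is_RInt_gamma_pdf; auto.
    + apply (is_RInt_ext (fun x => b * gamma_pdf m th x)).
      * intros x Hx. rewrite Rmin_left, Rmax_right in Hx by lra. symmetry; apply Habove; lra.
      * apply (is_RInt_scal (gamma_pdf m th)), is_RInt_gamma_pdf; auto.
  - rewrite gamma_cdf_of_nonneg, gamma_tail_0 by auto.
    replace (b * (1 - (1 - gamma_tail m th T))) with (b * (gamma_tail m th T - 0)) by ring.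
    apply (is_lim_plus' (fun _ => _)); [apply is_lim_const|].
    apply is_lim_scal_l', (is_lim_minus' (fun _ => _)); [apply is_lim_const|].
    apply is_lim_gamma_tail; auto.
Qed.

(** * Comparing two independent Erlang variables *)

Lemma is_RInt_gamma_pdf_cdf_affine M N th et al be b :
  (1 <= M)%nat -> (1 <= N)%nat -> 0 < th -> 0 < et -> 0 < al -> 0 < be -> be / al <= b ->
  is_RInt (fun x => gamma_pdf M th x * gamma_cdf N et (al * x - be)) 0 b
    (RInt (fun y => gamma_pdf N et y * gamma_tail M th ((y + be) / al)) 0 (al * b - be)
     - gamma_tail M th b * gamma_cdf N et (al * b - be)).
Proof.
  intros HM HN Hth Het Hal Hbe Hb.
  set (x0 := be / al) in Hb.
  set (phi := fun y => gamma_pdf N et y * gamma_tail M th ((y + be) / al)).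
  assert (Hx0 : 0 < x0) by (apply Rdiv_lt_0_compat; auto).
  assert (Hsign : forall x, al * x - be = al * (x - x0)) by (intros; unfold x0; field; lra).
  assert (Hphi : forall y, continuous phi y).
  { intros y. apply ex_derive_continuous_R. unfold phi.
    auto_derive. repeat split; auto using ex_derive_gamma_pdf, ex_derive_gamma_tail. }
  assert (Hzero : is_RInt (fun x => gamma_pdf M th x * gamma_cdf N et (al * x - be)) 0 x0 0).
  { apply (is_RInt_ext (fun _ => 0)).
    - intros x Hx. rewrite Rmin_left, Rmax_right in Hx by lra.
      rewrite gamma_cdf_of_nonpos, Rmult_0_r; auto.
      rewrite Hsign. nra.
    - pose proof (is_RInt_const (V := R_NormedModule) 0 x0 0) as H0.
      unfold scal in H0; simpl in H0; unfold mult in H0; simpl in H0.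
      rewrite Rmult_0_r in H0. exact H0. }
  (* On [[x0, b]]: integrate by parts against [F], then substitute [y = al x - be]. *)
  set (F := fun x => - gamma_tail M th x * (1 - gamma_tail N et (al * x - be))).
  assert (Hparts : is_RInt (fun x => gamma_pdf M th x * (1 - gamma_tail N et (al * x - be))
                     - gamma_tail M th x * (al * gamma_pdf N et (al * x - be))) x0 b
                     (minus (F b) (F x0))).
  { apply (is_RInt_derive F).
    - intros x _. unfold F. auto_derive.
      + repeat split; auto using ex_derive_gamma_tail.
      + match goal with |- context [Derive ?f x] =>
          replace (Derive f x) with (- gamma_pdf M th x)
            by (symmetry; apply is_derive_unique, is_derive_gamma_tail; auto) end.
        match goal with |- context [Derive ?f ?p] =>
          replace (Derive f p) with (- gamma_pdf N et p)
            by (symmetry; apply is_derive_unique, is_derive_gamma_tail; auto) end.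
        replace (al * x + - be) with (al * x - be) by ring. ring.
    - intros x _. apply ex_derive_continuous_R. auto_derive.
      repeat split; auto using ex_derive_gamma_pdf, ex_derive_gamma_tail. }
  assert (Hsubst : is_RInt (fun x => gamma_tail M th x * (al * gamma_pdf N et (al * x - be))) x0 b
                     (RInt phi 0 (al * b - be))).
  { apply (is_RInt_ext (fun x => scal al (phi (al * x + - be)))).
    - intros x _. unfold phi, scal; simpl; unfold mult; simpl.
      replace ((al * x + - be + be) / al) with x by (field; lra).
      replace (al * x + - be) with (al * x - be) by ring. ring.
    - apply (is_RInt_comp_lin phi).
      replace (al * x0 + - be) with 0 by (pose proof (Hsign x0); lra).
      replace (al * b + - be) with (al * b - be) by ring.
      apply (RInt_correct (V := R_CompleteNormedModule)),
        (ex_RInt_continuous (V := R_CompleteNormedModule)).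
      intros; apply Hphi. }
  replace (RInt phi 0 (al * b - be) - gamma_tail M th b * gamma_cdf N et (al * b - be))
    with (0 + (minus (F b) (F x0) + RInt phi 0 (al * b - be))).
  2: { unfold F, minus, plus, opp; simpl.
       assert (0 <= al * b - be) by (rewrite Hsign; apply Rmult_le_pos; lra).
       rewrite (gamma_cdf_of_nonneg N et (al * b - be)) by auto.
       rewrite (Hsign x0), Rminus_diag, Rmult_0_r, gamma_tail_0 by auto. ring. }
  apply (is_RInt_Chasles (V := R_NormedModule) _ 0 x0 b); [exact Hzero|].
  apply (is_RInt_ext (fun x => (gamma_pdf M th x * (1 - gamma_tail N et (al * x - be))
           - gamma_tail M th x * (al * gamma_pdf N et (al * x - be)))
           + gamma_tail M th x * (al * gamma_pdf N et (al * x - be)))).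
  - intros x Hx. rewrite Rmin_left, Rmax_right in Hx by lra.
    rewrite gamma_cdf_of_nonneg by (rewrite Hsign; apply Rmult_le_pos; lra).
    lra.
  - apply (is_RInt_plus (V := R_NormedModule)); assumption.
Qed.

Lemma Gam_pos n : 0 < Gam n.
Proof. apply lt_0_INR, lt_O_fact. Qed.

Lemma Gam_succ n : Gam (n + 1) = INR (fact n).
Proof. unfold Gam. rewrite Nat.add_1_r. reflexivity. Qed.

Definition gamma_le_affine_coef (N : nat) (th et al be : R) (j k : nat) : R :=
  let w := be / (al * th) in
  exp (- w) / (Gam N * et ^ N) * (Binomial.C j k * (/ be) ^ k * w ^ j / Gam (j + 1))
  * (Gam (k + N) / (/ (al * th) + / et) ^ (k + N)).

(* [P(Y <= al X - be)] for independent [X ~ Gamma(M, th)] and [Y ~ Gamma(N, et)]. *)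
Definition gamma_prob_le_affine (M N : nat) (th et al be : R) : R :=
  sum_f_R0 (fun j => sum_f_R0 (gamma_le_affine_coef N th et al be j) j) (pred M).

Lemma gamma_pdf_tail_affine_expand M N th et al be y :
  (1 <= N)%nat -> 0 < th -> 0 < et -> 0 < al -> 0 < be ->
  gamma_pdf N et y * gamma_tail M th ((y + be) / al)
  = sum_f_R0 (fun j => sum_f_R0 (fun k => gamma_le_affine_coef N th et al be j k
        * gamma_pdf (k + N) (/ (/ (al * th) + / et)) y) j) (pred M).
Proof.
  intros HN Hth Het Hal Hbe.
  set (w := be / (al * th)). set (X := / (al * th) + / et).
  assert (HX : 0 < X).
  { unfold X. pose proof (Rinv_0_lt_compat _ (Rmult_lt_0_compat _ _ Hal Hth)).
    pose proof (Rinv_0_lt_compat _ Het). lra. }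
  unfold gamma_tail, exp_partial_sum.
  replace ((y + be) / al / th) with (w * (/ be * y + 1)) by (unfold w; field; lra).
  replace (- ((y + be) / al) / th) with (- (w * (/ be * y + 1))) by (unfold w; field; lra).
  rewrite <- Rmult_assoc, scal_sum. apply sum_eq. intros j _.
  rewrite Rpow_mult_distr, binomial.
  replace (w ^ j * sum_f_R0 (fun i => Binomial.C j i * (/ be * y) ^ i * 1 ^ (j - i)) j
           / INR (fact j) * (gamma_pdf N et y * exp (- (w * (/ be * y + 1)))))
    with ((w ^ j / INR (fact j) * (gamma_pdf N et y * exp (- (w * (/ be * y + 1)))))
          * sum_f_R0 (fun i => Binomial.C j i * (/ be * y) ^ i * 1 ^ (j - i)) j)
    by (field; apply INR_fact_neq_0).
  rewrite scal_sum. apply sum_eq. intros k _.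
  unfold gamma_le_affine_coef, gamma_pdf. fold w X.
  assert (Hexp : exp (- (w * (/ be * y + 1))) * exp (- y / et) = exp (- w) * exp (- y / / X)).
  { rewrite <- !exp_plus. f_equal. unfold w, X. field. repeat split; nra. }
  assert (Hpow : y ^ k * y ^ pred N = y ^ pred (k + N)).
  { rewrite <- pow_add. f_equal. lia. }
  rewrite pow1, Rpow_mult_distr, pow_inv, Gam_succ, <- Hpow.
  pose proof (Gam_pos N). pose proof (Gam_pos (k + N)). pose proof (INR_fact_neq_0 j).
  pose proof (pow_lt et N Het). pose proof (pow_lt X (k + N) HX).
  pose proof (pow_lt be k Hbe).
  transitivity ((exp (- (w * (/ be * y + 1))) * exp (- y / et)) * (y ^ k * y ^ pred N)
     * (Binomial.C j k * / be ^ k * w ^ j / (INR (fact j) * Gam N * et ^ N)));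
    [field; lra|].
  rewrite Hexp, pow_inv. field. repeat split; lra.
Qed.

Lemma is_lim_RInt_gamma_pdf_tail_affine M N th et al be :
  (1 <= N)%nat -> 0 < th -> 0 < et -> 0 < al -> 0 < be ->
  is_lim (fun s => RInt (fun y => gamma_pdf N et y * gamma_tail M th ((y + be) / al)) 0 s)
    p_infty (gamma_prob_le_affine M N th et al be).
Proof.
  intros HN Hth Het Hal Hbe.
  set (th' := / (/ (al * th) + / et)).
  assert (Hth' : 0 < th').
  { apply Rinv_0_lt_compat. pose proof (Rinv_0_lt_compat _ (Rmult_lt_0_compat _ _ Hal Hth)).
    pose proof (Rinv_0_lt_compat _ Het). lra. }
  set (c := gamma_le_affine_coef N th et al be).
  apply (is_lim_ext_loc (fun s => sum_f_R0 (fun j => sum_f_R0 (fun k =>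
           c j k * (gamma_tail (k + N) th' 0 - gamma_tail (k + N) th' s)) j) (pred M))).
  - exists 0. intros s _. symmetry. apply (is_RInt_unique (V := R_CompleteNormedModule)).
    apply (is_RInt_ext (fun y => sum_f_R0 (fun j => sum_f_R0 (fun k =>
             c j k * gamma_pdf (k + N) th' y) j) (pred M))).
    { intros y _. symmetry. apply gamma_pdf_tail_affine_expand; auto. }
    apply is_RInt_sum. intros j _. apply is_RInt_sum. intros k _.
    apply (is_RInt_scal (gamma_pdf (k + N) th')), is_RInt_gamma_pdf; [lia | auto].
  - apply is_lim_sum. intros j _. apply is_lim_sum. intros k _.
    rewrite gamma_tail_0 by auto.
    replace (gamma_le_affine_coef N th et al be j k) with (c j k * (1 - 0)) by (unfold c; ring).
    apply is_lim_scal_l', (is_lim_minus' (fun _ => 1)); [apply is_lim_const|].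
    apply is_lim_gamma_tail; [lia | auto].
Qed.

Lemma is_lim_RInt_gamma_pdf_cdf_affine M N th et al be :
  (1 <= M)%nat -> (1 <= N)%nat -> 0 < th -> 0 < et -> 0 < al -> 0 < be ->
  exists I : R -> R,
    Rbar_locally p_infty (fun b =>
      is_RInt (fun x => gamma_pdf M th x * gamma_cdf N et (al * x - be)) 0 b (I b)) /\
    is_lim I p_infty (gamma_prob_le_affine M N th et al be).
Proof.
  intros HM HN Hth Het Hal Hbe.
  set (phi := fun y => gamma_pdf N et y * gamma_tail M th ((y + be) / al)).
  exists (fun b => RInt phi 0 (al * b - be) - gamma_tail M th b * gamma_cdf N et (al * b - be)).
  split.
  - exists (be / al). intros b Hb.
    apply is_RInt_gamma_pdf_cdf_affine; auto. lra.
  - rewrite <- (Rminus_0_r (gamma_prob_le_affine M N th et al be)).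
    apply (is_lim_minus' (fun b => RInt phi 0 (al * b - be))).
    + apply (is_lim_comp (fun s => RInt phi 0 s) (fun b => al * b - be) p_infty _ p_infty);
        [apply is_lim_RInt_gamma_pdf_tail_affine; auto | apply is_lim_affine_pinfty; auto |].
      exists 0. intros b _. discriminate.
    + apply (is_lim_le_le_loc (fun _ => 0) (gamma_tail M th));
        [| apply is_lim_const | apply is_lim_gamma_tail; auto].
      exists 0. intros b Hb.
      pose proof (gamma_tail_ge0 M th b Hth (Rlt_le _ _ Hb)).
      pose proof (gamma_cdf_bounds N et (al * b - be) HN Het). nra.
Qed.

(** * Rate thresholds *)

Lemma pow2_lt_iff x y : 0 <= x -> 0 <= y -> (x ^ 2 < y ^ 2 <-> x < y).
Proof. intros Hx Hy. split; intros H; nra. Qed.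

Section RateThresholds.

Variables (Cx gm ps : R).
Hypotheses (hC0 : 0 <= Cx) (hC1 : Cx < 1) (hgm : 0 < gm) (hps : 0 < ps)
  (hps_sq : (1 + ps) ^ 2 = 1 + gm * (1 - Cx ^ 2)).

Let c2 := 1 - Cx ^ 2.

Lemma c2_bounds : 0 < c2 <= 1.
Proof. unfold c2. simpl. nra. Qed.

Lemma rd_poly_lt_iff b w : 0 <= b -> 0 < w ->
  ((b + w) ^ 2 - (b * Cx) ^ 2 < (1 + gm) * w ^ 2 <-> b * c2 < ps * w).
Proof.
  intros Hb Hw. pose proof c2_bounds.
  (* Multiplying by [c2] completes the square:
     [c2 ((b + w)^2 - (b Cx)^2) + Cx^2 w^2 = (b c2 + w)^2]. *)
  assert (Hsq : c2 * ((b + w) ^ 2 - (b * Cx) ^ 2 - (1 + gm) * w ^ 2)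
                = (b * c2 + w) ^ 2 - ((1 + ps) * w) ^ 2).
  { rewrite (Rpow_mult_distr (1 + ps)), hps_sq. unfold c2. ring. }
  transitivity ((b * c2 + w) ^ 2 < ((1 + ps) * w) ^ 2); [split; intros; nra|].
  rewrite pow2_lt_iff by nra. lra.
Qed.

Definition sr_discr x := (x - gm) ^ 2 + gm * c2 * ((x + 1) ^ 2 - 1 - gm).

(* The larger root in [a] of the quadratic equation
   [(x + a + 1)^2 - (a Cx)^2 = (1 + gm) ((a + 1)^2 - (a Cx)^2)], clamped at [0]. *)
Definition sr_threshold x := Rmax 0 ((x - gm + sqrt (sr_discr x)) / (gm * c2)).

Lemma sr_discr_facts x : 0 <= x -> 0 <= sr_discr x /\ x - gm <= sqrt (sr_discr x).
Proof.
  intros Hx. pose proof c2_bounds.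
  assert (HD : 0 <= sr_discr x).
  { unfold sr_discr.
    replace ((x - gm) ^ 2 + gm * c2 * ((x + 1) ^ 2 - 1 - gm))
      with ((x - gm * (1 - c2)) ^ 2 + gm * c2 * x ^ 2 + gm ^ 2 * (1 - c2) * c2) by ring.
    assert (0 <= gm * c2 * x ^ 2) by (apply Rmult_le_pos; [nra | apply pow2_ge_0]).
    assert (0 <= gm ^ 2 * (1 - c2) * c2) by (apply Rmult_le_pos; [apply Rmult_le_pos|]; nra).
    pose proof (pow2_ge_0 (x - gm * (1 - c2))). lra. }
  split; auto.
  destruct (Rle_or_lt (x - gm) 0) as [Hle | Hlt]; [pose proof (sqrt_pos (sr_discr x)); lra|].
  rewrite <- (sqrt_pow2 (x - gm)) by lra. apply sqrt_le_1_alt.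
  unfold sr_discr. assert (0 <= gm * c2 * ((x + 1) ^ 2 - 1 - gm)) by (apply Rmult_le_pos; nra).
  lra.
Qed.

Lemma sr_threshold_ge0 x : 0 <= sr_threshold x.
Proof. apply Rmax_l. Qed.

Lemma sr_poly_lt_iff x a : 0 <= x -> 0 < a ->
  ((x + a + 1) ^ 2 - (a * Cx) ^ 2 < (1 + gm) * ((a + 1) ^ 2 - (a * Cx) ^ 2)
   <-> sr_threshold x < a).
Proof.
  intros Hx Ha. pose proof c2_bounds. destruct (sr_discr_facts x Hx) as [HD Hs].
  set (s := sqrt (sr_discr x)) in *. set (K := gm * c2).
  assert (HK : 0 < K) by (unfold K; nra).
  assert (Hs0 : 0 <= s) by apply sqrt_pos.
  assert (Hs2 : s ^ 2 = sr_discr x) by (unfold s; simpl; rewrite Rmult_1_r; apply sqrt_sqrt; auto).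
  assert (Hkey : K * ((1 + gm) * ((a + 1) ^ 2 - (a * Cx) ^ 2) - ((x + a + 1) ^ 2 - (a * Cx) ^ 2))
                 = (K * a - (x - gm)) ^ 2 - s ^ 2).
  { rewrite Hs2. unfold K, sr_discr, c2. ring. }
  transitivity (s < K * a - (x - gm)).
  - (* The smaller root [(x - gm - s) / K] is [<= 0 < a] because [x - gm <= s]. *)
    assert (Hpos : 0 < K * a - (x - gm) + s) by nra.
    split; intros Hlt; nra.
  - unfold sr_threshold. fold s K. split; intros Hlt.
    + apply Rmax_lub_lt; [lra|]. apply (Rmult_lt_reg_l K); [lra|].
      replace (K * ((x - gm + s) / K)) with (x - gm + s) by (field; lra). lra.
    + apply (Rle_lt_trans _ _ _ (Rmax_r 0 _)) in Hlt. apply (Rmult_lt_compat_l K) in Hlt; [|lra].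
      replace (K * ((x - gm + s) / K)) with (x - gm + s) in Hlt by (field; lra). lra.
Qed.

Lemma sr_poly_ge_bound x a : 0 <= x -> 0 <= a ->
  (1 + gm) * ((a + 1) ^ 2 - (a * Cx) ^ 2) <= (x + a + 1) ^ 2 - (a * Cx) ^ 2 ->
  ps * (a + 1) <= x.
Proof.
  intros Hx Ha H. pose proof c2_bounds.
  (* [(1 + ps)^2 (a + 1)^2 = (1 + gm) (a + 1)^2 - gm Cx^2 (a + 1)^2
                            <= (1 + gm) (a + 1)^2 - gm Cx^2 a^2 <= (x + a + 1)^2]. *)
  assert (Hsq : ((1 + ps) * (a + 1)) ^ 2 <= (x + a + 1) ^ 2).
  { rewrite Rpow_mult_distr, hps_sq.
    assert (gm * Cx ^ 2 * a ^ 2 <= gm * Cx ^ 2 * (a + 1) ^ 2).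
    { apply Rmult_le_compat_l; [apply Rmult_le_pos; [lra | apply pow2_ge_0] | nra]. }
    unfold c2 in *. nra. }
  assert (Hle : (1 + ps) * (a + 1) <= x + a + 1).
  { destruct (Rle_or_lt ((1 + ps) * (a + 1)) (x + a + 1)) as [|Hlt]; auto.
    apply pow2_lt_iff in Hlt; nra. }
  nra.
Qed.

Lemma sr_threshold_le x : 0 <= x -> sr_threshold x <= Rmax 0 (x / ps - 1).
Proof.
  intros Hx. destruct (Rle_lt_dec (sr_threshold x) 0) as [H0 | Hpos].
  - eapply Rle_trans; [exact H0 | apply Rmax_l].
  - eapply Rle_trans; [|apply Rmax_r].
    assert (Hb : ps * (sr_threshold x + 1) <= x).
    { apply sr_poly_ge_bound; [auto | lra |].
      apply Rnot_lt_le. rewrite sr_poly_lt_iff by auto. lra. }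
    apply (Rmult_le_reg_l ps); [lra|].
    replace (ps * (x / ps - 1)) with (x - ps) by (field; lra). lra.
Qed.

Lemma continuous_sr_threshold x : continuous sr_threshold x.
Proof.
  apply continuous_Rmax0_comp.
  apply (continuous_mult (U := R_UniformSpace) (K := R_AbsRing)); [|apply continuous_const].
  apply (continuous_plus (U := R_UniformSpace) (K := R_AbsRing) (V := R_NormedModule)).
  - apply ex_derive_continuous_R. auto_derive. exact I.
  - apply continuous_sqrt_comp, ex_derive_continuous_R. unfold sr_discr. auto_derive. exact I.
Qed.

End RateThresholds.

Lemma gam_r_pos r : 0 < r -> 0 < gam_r r.
Proof.
  intros Hr. unfold gam_r. pose proof (Rpower_lt 2 0 (2 * r) ltac:(lra) ltac:(lra)).
  rewrite Rpower_O in H by lra. lra.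
Qed.

Lemma half_log2_ratio_lt_iff n d r : 0 < n -> 0 < d ->
  (/ 2 * log2 (n / d) < r <-> n < (1 + gam_r r) * d).
Proof.
  intros Hn Hd. unfold log2, gam_r, Rpower.
  replace (1 + (exp (2 * r * ln 2) - 1)) with (exp (2 * r * ln 2)) by ring.
  assert (Hln2 : 0 < ln 2) by (rewrite <- ln_1; apply ln_increasing; lra).
  assert (Hnd : 0 < n / d) by (apply Rdiv_lt_0_compat; auto).
  transitivity (n / d < exp (2 * r * ln 2)).
  - rewrite <- (exp_ln (n / d)) at 2 by auto.
    split; intros H.
    + apply exp_increasing. apply (Rmult_lt_compat_r (2 * ln 2)) in H; [|lra].
      replace (/ 2 * (ln (n / d) / ln 2) * (2 * ln 2)) with (ln (n / d)) in H by (field; lra).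
      lra.
    + apply exp_lt_inv in H. apply (Rmult_lt_reg_r (2 * ln 2)); [lra|].
      replace (/ 2 * (ln (n / d) / ln 2) * (2 * ln 2)) with (ln (n / d)) by (field; lra).
      lra.
  - split; intros H.
    + apply (Rmult_lt_compat_r d) in H; auto. replace (n / d * d) with n in H by (field; lra).
      exact H.
    + apply (Rmult_lt_reg_r d); auto. replace (n / d * d) with n by (field; lra). exact H.
Qed.

Lemma Psi_pos r Cx : 0 < r -> 0 <= Cx < 1 -> 0 < Psi r Cx.
Proof.
  intros Hr [HC0 HC1]. unfold Psi. pose proof (gam_r_pos r Hr).
  assert (0 < gam_r r * (1 - Cx ^ 2)) by (apply Rmult_lt_0_compat; simpl; nra).
  cut (sqrt 1 < sqrt (1 + gam_r r * (1 - Cx ^ 2))); [rewrite sqrt_1; lra|].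
  apply sqrt_lt_1; lra.
Qed.

Lemma Psi_sq r Cx : 0 < r -> 0 <= Cx < 1 -> (1 + Psi r Cx) ^ 2 = 1 + gam_r r * (1 - Cx ^ 2).
Proof.
  intros Hr [HC0 HC1]. unfold Psi. pose proof (gam_r_pos r Hr).
  replace (1 + (sqrt (1 + gam_r r * (1 - Cx ^ 2)) - 1))
    with (sqrt (1 + gam_r r * (1 - Cx ^ 2))) by ring.
  apply pow2_sqrt.
  assert (0 <= gam_r r * (1 - Cx ^ 2)) by (apply Rmult_le_pos; simpl; nra). lra.
Qed.

Lemma theta_pos p m : 0 < p -> (1 <= m)%nat -> 0 < theta p m.
Proof. intros. unfold theta. apply Rdiv_lt_0_compat; auto. apply lt_0_INR. lia. Qed.

(** * The lower bound as a product of two such probabilities *)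

Lemma powerRZ_sub_nat x a b : x <> 0 ->
  powerRZ x (Z.of_nat a - Z.of_nat b)%Z = x ^ a / x ^ b.
Proof.
  intros Hx. unfold Z.sub. rewrite powerRZ_add, powerRZ_neg', <- !pow_powerRZ by auto.
  reflexivity.
Qed.

Lemma sum_f_R0_mult_double_sums (A B : nat -> nat -> R) n1 n2 :
  sum_f_R0 (fun m => sum_f_R0 (fun m' => sum_f_R0 (fun k => sum_f_R0 (fun k' =>
    A m k * B m' k') m') m) n2) n1
  = sum_f_R0 (fun m => sum_f_R0 (A m) m) n1 * sum_f_R0 (fun m' => sum_f_R0 (B m') m') n2.
Proof.
  rewrite Rmult_comm, scal_sum. apply sum_eq. intros m _.
  rewrite scal_sum. apply sum_eq. intros m' _.
  rewrite scal_sum. apply sum_eq. intros k _.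
  rewrite scal_sum. apply sum_eq. intros k' _. ring.
Qed.

Lemma P_EE_LB_eq Ps Pr Cx r msr mrr mrd msd pisr pirr pird pisd :
  0 < Ps -> 0 < Pr -> 0 < Psi r Cx -> 0 < 1 - Cx ^ 2 ->
  0 < theta pisr msr -> 0 < theta pirr mrr -> 0 < theta pird mrd -> 0 < theta pisd msd ->
  P_EE_LB Ps Pr Cx r msr mrr mrd msd pisr pirr pird pisd
  = 1 - gamma_prob_le_affine msr mrr (theta pisr msr) (theta pirr mrr)
          (Ps / (Psi r Cx * Pr)) (/ Pr)
        * gamma_prob_le_affine mrd msd (theta pird mrd) (theta pisd msd)
          (Pr * (1 - Cx ^ 2) / (Psi r Cx * Ps)) (/ Ps).
Proof.
  intros HPs HPr Hps Hc2 Ht1 Ht2 Ht3 Ht4.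
  unfold P_EE_LB, gamma_prob_le_affine. cbv zeta.
  set (ps := Psi r Cx) in *. set (c2 := 1 - Cx ^ 2) in *.
  set (t1 := theta pisr msr) in *. set (t2 := theta pirr mrr) in *.
  set (t3 := theta pird mrd) in *. set (t4 := theta pisd msd) in *.
  rewrite <- sum_f_R0_mult_double_sums. f_equal.
  rewrite scal_sum. apply sum_eq. intros m _.
  rewrite Rmult_comm, scal_sum. apply sum_eq. intros m' _.
  rewrite Rmult_comm, scal_sum. apply sum_eq. intros k _.
  rewrite Rmult_comm, scal_sum. apply sum_eq. intros k' _.
  unfold gamma_le_affine_coef. rewrite !Rinv_inv.
  replace (/ Pr / (Ps / (ps * Pr) * t1)) with (ps / (Ps * t1)) by (field; repeat split; lra).
  replace (/ Ps / (Pr * c2 / (ps * Ps) * t3)) with (ps / (Pr * c2 * t3))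
    by (field; repeat split; lra).
  replace (/ (Ps / (ps * Pr) * t1)) with (Pr * ps / (Ps * t1)) by (field; repeat split; lra).
  replace (/ (Pr * c2 / (ps * Ps) * t3)) with (Ps * ps / (Pr * t3 * c2))
    by (field; repeat split; lra).
  replace (/ t2) with (1 / t2) by (field; lra). replace (/ t4) with (1 / t4) by (field; lra).
  set (Xs := Pr * ps / (Ps * t1) + 1 / t2). set (Xr := Ps * ps / (Pr * t3 * c2) + 1 / t4).
  assert (HXs : 0 < Xs).
  { unfold Xs. assert (0 < Pr * ps / (Ps * t1)) by (apply Rdiv_lt_0_compat; nra).
    assert (0 < 1 / t2) by (apply Rdiv_lt_0_compat; lra). lra. }
  assert (HXr : 0 < Xr).
  { unfold Xr. assert (0 < Ps * ps / (Pr * t3 * c2))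
      by (apply Rdiv_lt_0_compat; [nra | apply Rmult_lt_0_compat; nra]).
    assert (0 < 1 / t4) by (apply Rdiv_lt_0_compat; lra). lra. }
  assert (Hexp : exp (- ps * (1 / (Ps * t1) + 1 / (Pr * t3 * c2)))
                 = exp (- (ps / (Ps * t1))) * exp (- (ps / (Pr * c2 * t3)))).
  { rewrite <- exp_plus. f_equal. field. repeat split; lra. }
  rewrite Hexp, !powerRZ_sub_nat, pow_add by lra.
  unfold Rdiv. rewrite !Rpow_mult_distr, !pow_inv, !Rpow_mult_distr.
  pose proof (Gam_pos mrr). pose proof (Gam_pos msd). pose proof (Gam_pos (k + mrr)).
  pose proof (Gam_pos (k' + msd)). pose proof (Gam_pos (m + 1)). pose proof (Gam_pos (m' + 1)).
  pose proof (pow_lt Pr k HPr). pose proof (pow_lt Pr m' HPr).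
  pose proof (pow_lt Ps m HPs). pose proof (pow_lt Ps k' HPs).
  pose proof (pow_lt t1 m Ht1). pose proof (pow_lt t3 m' Ht3).
  pose proof (pow_lt t2 mrr Ht2). pose proof (pow_lt t4 msd Ht4).
  pose proof (pow_lt c2 m' Hc2). pose proof (pow_lt Xs (k + mrr) HXs).
  pose proof (pow_lt Xr (k' + msd) HXr).
  field. repeat split; lra.
Qed.

(** * The outage probability *)

Lemma Rmin_lt_iff a b c : Rmin a b < c <-> a < c \/ b < c.
Proof. unfold Rmin. destruct (Rle_dec a b); lra. Qed.

Section Outage.

Variables (Ps : R) (msr mrr mrd msd : nat) (pisr pirr pird pisd : R).
Hypotheses (hPs : 0 < Ps)
  (hmsr : (1 <= msr)%nat) (hmrr : (1 <= mrr)%nat)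
  (hmrd : (1 <= mrd)%nat) (hmsd : (1 <= msd)%nat)
  (hpisr : 0 < pisr) (hpirr : 0 < pirr) (hpird : 0 < pird) (hpisd : 0 < pisd).
Variables (r Pr Cx : R).
Hypotheses (hr : 0 < r) (hPr : 0 < Pr) (hC0 : 0 <= Cx) (hC1 : Cx < 1).

Let tsr := theta pisr msr.
Let trr := theta pirr mrr.
Let trd := theta pird mrd.
Let tsd := theta pisd msd.
Let gm := gam_r r.
Let ps := Psi r Cx.
Let c2 := 1 - Cx ^ 2.

Let al_rd := Pr * c2 / (ps * Ps).
Let be_rd := / Ps.
Let al_sr := Ps / (ps * Pr).
Let be_sr := / Pr.
Let U_rd := gamma_prob_le_affine mrd msd trd tsd al_rd be_rd.
Let U_sr := gamma_prob_le_affine msr mrr tsr trr al_sr be_sr.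

Let T_rr x1 := sr_threshold Cx gm (Ps * x1) / Pr.
Let no_sr_outage x1 x2 := if Rlt_dec (R_sr Ps Pr Cx x1 x2) r then 0 else 1.

Fact tsr_pos : 0 < tsr. Proof. apply theta_pos; auto. Qed.
Fact trr_pos : 0 < trr. Proof. apply theta_pos; auto. Qed.
Fact trd_pos : 0 < trd. Proof. apply theta_pos; auto. Qed.
Fact tsd_pos : 0 < tsd. Proof. apply theta_pos; auto. Qed.
Fact gm_pos : 0 < gm. Proof. apply gam_r_pos; auto. Qed.
Fact ps_pos : 0 < ps. Proof. apply Psi_pos; auto. Qed.
Fact ps_sq : (1 + ps) ^ 2 = 1 + gm * (1 - Cx ^ 2). Proof. apply Psi_sq; auto. Qed.
Fact c2_pos : 0 < c2. Proof. unfold c2. simpl. nra. Qed.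
Fact al_rd_pos : 0 < al_rd.
Proof. pose proof ps_pos. pose proof c2_pos. unfold al_rd. apply Rdiv_lt_0_compat; nra. Qed.
Fact al_sr_pos : 0 < al_sr.
Proof. pose proof ps_pos. unfold al_sr. apply Rdiv_lt_0_compat; nra. Qed.
Fact be_rd_pos : 0 < be_rd. Proof. apply Rinv_0_lt_compat; auto. Qed.
Fact be_sr_pos : 0 < be_sr. Proof. apply Rinv_0_lt_compat; auto. Qed.

Local Hint Resolve tsr_pos trr_pos trd_pos tsd_pos gm_pos ps_pos ps_sq c2_pos
  al_rd_pos al_sr_pos be_rd_pos be_sr_pos : core.

Lemma R_rd_lt_iff x3 x4 : 0 <= x3 -> 0 <= x4 ->
  (R_rd Ps Pr Cx x3 x4 < r <-> al_rd * x3 - be_rd < x4).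
Proof.
  intros H3 H4. pose proof ps_pos as Hps. pose proof c2_pos as Hc2. unfold R_rd.
  assert (Hb : 0 <= Pr * x3) by nra.
  assert (Hw : 0 < Ps * x4 + 1) by nra.
  replace (Pr * x3 + Ps * x4 + 1) with (Pr * x3 + (Ps * x4 + 1)) by ring.
  assert (Hn : 0 < (Pr * x3 + (Ps * x4 + 1)) ^ 2 - (Pr * x3 * Cx) ^ 2).
  { replace ((Pr * x3 + (Ps * x4 + 1)) ^ 2 - (Pr * x3 * Cx) ^ 2)
      with ((Pr * x3) ^ 2 * c2 + 2 * (Pr * x3) * (Ps * x4 + 1) + (Ps * x4 + 1) ^ 2)
      by (unfold c2; ring).
    pose proof (pow2_ge_0 (Pr * x3)). nra. }
  rewrite half_log2_ratio_lt_iff by (auto; apply pow_lt; lra). fold gm.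
  rewrite (rd_poly_lt_iff Cx gm ps) by auto. fold c2.
  unfold al_rd, be_rd.
  replace (Pr * c2 / (ps * Ps) * x3 - / Ps) with ((Pr * x3 * c2 - ps) / (ps * Ps))
    by (field; lra).
  split; intros Hlt.
  - apply (Rmult_lt_reg_l (ps * Ps)); [nra|].
    replace (ps * Ps * ((Pr * x3 * c2 - ps) / (ps * Ps))) with (Pr * x3 * c2 - ps)
      by (field; lra). nra.
  - apply (Rmult_lt_compat_l (ps * Ps)) in Hlt; [|nra].
    replace (ps * Ps * ((Pr * x3 * c2 - ps) / (ps * Ps))) with (Pr * x3 * c2 - ps) in Hlt
      by (field; lra). nra.
Qed.

Lemma R_sr_lt_iff x1 x2 : 0 <= x1 -> 0 < x2 ->
  (R_sr Ps Pr Cx x1 x2 < r <-> T_rr x1 < x2).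
Proof.
  intros H1 H2. pose proof c2_pos as Hc2. unfold R_sr.
  assert (Hx : 0 <= Ps * x1) by nra.
  assert (Ha : 0 < Pr * x2) by nra.
  assert (Hd : 0 < (Pr * x2 + 1) ^ 2 - (Pr * x2 * Cx) ^ 2)
    by (unfold c2 in *; simpl in *; nra).
  rewrite half_log2_ratio_lt_iff by (simpl in *; nra). fold gm.
  rewrite (sr_poly_lt_iff Cx gm) by auto. unfold T_rr.
  split; intros Hlt.
  - apply (Rmult_lt_reg_r Pr); auto. unfold Rdiv. rewrite Rmult_assoc, Rinv_l; lra.
  - apply (Rmult_lt_compat_r Pr) in Hlt; auto. unfold Rdiv in Hlt.
    rewrite Rmult_assoc, Rinv_l in Hlt; lra.
Qed.

Lemma gamma_cdf_T_rr_le x1 : 0 <= x1 ->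
  gamma_cdf mrr trr (T_rr x1) <= gamma_cdf mrr trr (al_sr * x1 - be_sr).
Proof.
  intros H1. pose proof ps_pos as Hps.
  set (T := sr_threshold Cx gm (Ps * x1)).
  assert (HT0 : 0 <= T) by apply sr_threshold_ge0.
  assert (HT : T <= Rmax 0 (Ps * x1 / ps - 1)) by (apply sr_threshold_le; auto; nra).
  assert (Hal : al_sr * x1 - be_sr = (Ps * x1 / ps - 1) / Pr)
    by (unfold al_sr, be_sr; field; lra).
  apply gamma_cdf_le; auto. unfold T_rr. fold T. rewrite Hal.
  rewrite (Rmax_right 0 (T / Pr)) by (apply Rdiv_le_0_compat; lra).
  destruct (Rle_dec 0 (Ps * x1 / ps - 1)) as [Hy | Hy].
  - rewrite Rmax_right in HT by auto. eapply Rle_trans; [|apply Rmax_r].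
    apply Rmult_le_compat_r; [left; apply Rinv_0_lt_compat|]; auto.
  - rewrite Rmax_left in HT by lra. replace T with 0 by lra.
    unfold Rdiv. rewrite Rmult_0_l. apply Rmax_l.
Qed.

(* [outage_densK] is the outage integrand integrated over all but the first [K] gains. *)
Let outage_dens3 x1 x2 x3 :=
  gamma_pdf msr tsr x1 * gamma_pdf mrr trr x2 * gamma_pdf mrd trd x3
  * (1 - no_sr_outage x1 x2 * gamma_cdf msd tsd (al_rd * x3 - be_rd)).
Let outage_dens2 x1 x2 :=
  gamma_pdf msr tsr x1 * gamma_pdf mrr trr x2 * (1 - no_sr_outage x1 x2 * U_rd).
Let outage_dens1 x1 := gamma_pdf msr tsr x1 * (1 - U_rd * gamma_cdf mrr trr (T_rr x1)).

Lemma ImprInt0_outage_integrand x1 x2 x3 : 0 <= x3 ->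
  ImprInt0 (outage_integrand Ps Pr Cx r msr mrr mrd msd pisr pirr pird pisd x1 x2 x3)
    (outage_dens3 x1 x2 x3).
Proof.
  intros H3.
  set (c := gamma_pdf msr tsr x1 * gamma_pdf mrr trr x2 * gamma_pdf mrd trd x3).
  set (T := Rmax 0 (al_rd * x3 - be_rd)).
  replace (outage_dens3 x1 x2 x3)
    with (c * (1 - no_sr_outage x1 x2) * gamma_cdf msd tsd T + c * (1 - gamma_cdf msd tsd T))
    by (unfold outage_dens3, T; rewrite gamma_cdf_Rmax0; fold c; ring).
  apply ImprInt0_gamma_pdf_step; auto; [apply Rmax_l | |].
  - intros x4 [Hx4 HxT].
    assert (Hrd : ~ R_rd Ps Pr Cx x3 x4 < r).
    { rewrite R_rd_lt_iff by lra. unfold T, Rmax in HxT.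
      destruct (Rle_dec 0 (al_rd * x3 - be_rd)); lra. }
    unfold outage_integrand, no_sr_outage, c. fold tsr trr trd tsd.
    destruct (Rlt_dec (Rmin (R_sr Ps Pr Cx x1 x2) (R_rd Ps Pr Cx x3 x4)) r) as [Hm | Hm];
      rewrite Rmin_lt_iff in Hm;
      destruct (Rlt_dec (R_sr Ps Pr Cx x1 x2) r); try tauto; ring.
  - intros x4 HTx.
    assert (Hrd : R_rd Ps Pr Cx x3 x4 < r).
    { pose proof (Rmax_l 0 (al_rd * x3 - be_rd)). pose proof (Rmax_r 0 (al_rd * x3 - be_rd)).
      rewrite R_rd_lt_iff by (unfold T in HTx; lra). unfold T in HTx; lra. }
    unfold outage_integrand, c. fold tsr trr trd tsd.
    destruct (Rlt_dec (Rmin (R_sr Ps Pr Cx x1 x2) (R_rd Ps Pr Cx x3 x4)) r) as [Hm | Hm];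
      rewrite Rmin_lt_iff in Hm; [ring | tauto].
Qed.

Lemma ImprInt0_outage_dens3 x1 x2 :
  ImprInt0 (outage_dens3 x1 x2) (outage_dens2 x1 x2).
Proof.
  destruct (is_lim_RInt_gamma_pdf_cdf_affine mrd msd trd tsd al_rd be_rd)
    as [I [[M HI] HlimI]]; auto.
  set (c := gamma_pdf msr tsr x1 * gamma_pdf mrr trr x2).
  set (n := no_sr_outage x1 x2).
  apply (ImprInt0_of_is_lim _ (fun b =>
           c * ((gamma_tail mrd trd 0 - gamma_tail mrd trd b) - n * I b))).
  - exists M. intros b Hb.
    apply (is_RInt_ext (fun x3 => c * (gamma_pdf mrd trd x3
             - n * (gamma_pdf mrd trd x3 * gamma_cdf msd tsd (al_rd * x3 - be_rd))))).
    { intros x3 _. unfold outage_dens3. fold c n. lra. }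
    apply (is_RInt_scal (V := R_NormedModule)), (is_RInt_minus (V := R_NormedModule));
      [apply is_RInt_gamma_pdf; auto | apply (is_RInt_scal (V := R_NormedModule)), HI; auto].
  - replace (outage_dens2 x1 x2) with (c * ((1 - 0) - n * U_rd))
      by (unfold outage_dens2, c, n; ring).
    rewrite gamma_tail_0 by auto.
    apply is_lim_scal_l', (is_lim_minus' (fun b => 1 - gamma_tail mrd trd b));
      [|apply is_lim_scal_l', HlimI].
    apply (is_lim_minus' (fun _ => 1)); [apply is_lim_const | apply is_lim_gamma_tail; auto].
Qed.

Lemma ImprInt0_outage_dens2 x1 : 0 <= x1 ->
  ImprInt0 (outage_dens2 x1) (outage_dens1 x1).
Proof.
  intros H1. set (f1 := gamma_pdf msr tsr x1).
  assert (HT : 0 <= T_rr x1) by (apply Rdiv_le_0_compat; [apply sr_threshold_ge0 | auto]).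
  replace (outage_dens1 x1)
    with (f1 * (1 - U_rd) * gamma_cdf mrr trr (T_rr x1) + f1 * (1 - gamma_cdf mrr trr (T_rr x1)))
    by (unfold outage_dens1; fold f1; ring).
  apply ImprInt0_gamma_pdf_step; auto.
  - intros x2 [Hx2 HxT]. unfold outage_dens2, no_sr_outage. fold f1.
    destruct (Rlt_dec (R_sr Ps Pr Cx x1 x2) r) as [Hsr | Hsr]; [|ring].
    rewrite R_sr_lt_iff in Hsr by auto. lra.
  - intros x2 HTx. unfold outage_dens2, no_sr_outage. fold f1.
    destruct (Rlt_dec (R_sr Ps Pr Cx x1 x2) r) as [Hsr | Hsr]; [ring|].
    rewrite R_sr_lt_iff in Hsr by lra. lra.
Qed.

Let no_outage_sr_dens x := gamma_pdf msr tsr x * gamma_cdf mrr trr (T_rr x).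

Lemma continuous_no_outage_sr_dens x : continuous no_outage_sr_dens x.
Proof.
  apply (continuous_mult (U := R_UniformSpace) (K := R_AbsRing));
    [apply continuous_gamma_pdf|].
  apply continuous_gamma_cdf_comp; auto.
  apply (continuous_mult (U := R_UniformSpace) (K := R_AbsRing)); [|apply continuous_const].
  apply (continuous_comp (fun y => Ps * y) (sr_threshold Cx gm));
    [apply ex_derive_continuous_R; auto_derive; exact I | apply continuous_sr_threshold].
Qed.

Lemma is_RInt_no_outage_sr_dens a b :
  is_RInt no_outage_sr_dens a b (RInt no_outage_sr_dens a b).
Proof.
  apply (RInt_correct (V := R_CompleteNormedModule)),
    (ex_RInt_continuous (V := R_CompleteNormedModule)).
  intros; apply continuous_no_outage_sr_dens.
Qed.

Lemma ImprInt0_outage_dens1 (I : R) : is_lim (fun b => RInt no_outage_sr_dens 0 b) p_infty I ->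
  ImprInt0 outage_dens1 (1 - U_rd * I).
Proof.
  intros HI.
  apply (ImprInt0_of_is_lim _ (fun b =>
           (gamma_tail msr tsr 0 - gamma_tail msr tsr b) - U_rd * RInt no_outage_sr_dens 0 b)).
  - exists 0. intros b _.
    apply (is_RInt_ext (fun x => gamma_pdf msr tsr x - U_rd * no_outage_sr_dens x)).
    { intros x _. unfold outage_dens1, no_outage_sr_dens. lra. }
    apply (is_RInt_minus (V := R_NormedModule));
      [apply is_RInt_gamma_pdf; auto |
       apply (is_RInt_scal (V := R_NormedModule)), is_RInt_no_outage_sr_dens].
  - rewrite gamma_tail_0 by auto. replace (1 - U_rd * I) with ((1 - 0) - U_rd * I) by ring.
    apply (is_lim_minus' (fun b => 1 - gamma_tail msr tsr b)); [|apply is_lim_scal_l', HI].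
    apply (is_lim_minus' (fun _ => 1)); [apply is_lim_const | apply is_lim_gamma_tail; auto].
Qed.

Lemma ex_lim_RInt_no_outage_sr_dens :
  exists I : R, is_lim (fun b => RInt no_outage_sr_dens 0 b) p_infty I.
Proof.
  assert (Hbounds : forall x, 0 <= x -> 0 <= no_outage_sr_dens x <= gamma_pdf msr tsr x).
  { intros x Hx. unfold no_outage_sr_dens.
    pose proof (gamma_pdf_ge0 msr tsr x tsr_pos Hx).
    pose proof (gamma_cdf_bounds mrr trr (T_rr x) hmrr trr_pos). nra. }
  apply (is_lim_incr_bounded _ 0 1).
  - intros s t Hst.
    assert (Hst0 : 0 <= RInt no_outage_sr_dens s t).
    { apply (is_RInt_ge_0 no_outage_sr_dens s t); [lra | apply is_RInt_no_outage_sr_dens |].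
      intros x Hx. apply Hbounds. lra. }
    rewrite (is_RInt_unique (V := R_CompleteNormedModule) _ _ _ _
                  (is_RInt_Chasles (V := R_NormedModule) _ 0 s t _ _
                     (is_RInt_no_outage_sr_dens 0 s) (is_RInt_no_outage_sr_dens s t))).
    unfold plus; simpl. lra.
  - intros t Ht. apply (Rle_trans _ (gamma_tail msr tsr 0 - gamma_tail msr tsr t)).
    + apply (is_RInt_le no_outage_sr_dens (gamma_pdf msr tsr) 0 t); auto.
      * apply is_RInt_no_outage_sr_dens.
      * apply is_RInt_gamma_pdf; auto.
      * intros x Hx. apply Hbounds. lra.
    + rewrite gamma_tail_0 by auto. pose proof (gamma_tail_ge0 msr tsr t tsr_pos Ht). lra.
Qed.

Lemma lim_RInt_no_outage_sr_dens_le (I : R) :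
  is_lim (fun b => RInt no_outage_sr_dens 0 b) p_infty I -> I <= U_sr.
Proof.
  intros HI.
  destruct (is_lim_RInt_gamma_pdf_cdf_affine msr mrr tsr trr al_sr be_sr)
    as [J [[M HJ] HlimJ]]; auto.
  apply (is_lim_le_loc (fun b => RInt no_outage_sr_dens 0 b) J p_infty I U_sr); auto.
  exists (Rmax 0 M). intros b Hb.
  apply (is_RInt_le no_outage_sr_dens
           (fun x => gamma_pdf msr tsr x * gamma_cdf mrr trr (al_sr * x - be_sr)) 0 b);
    [pose proof (Rmax_l 0 M); lra | apply is_RInt_no_outage_sr_dens |
     apply HJ; pose proof (Rmax_r 0 M); lra |].
  intros x Hx. unfold no_outage_sr_dens. apply Rmult_le_compat_l.
  - apply gamma_pdf_ge0; auto; lra.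
  - apply gamma_cdf_T_rr_le. lra.
Qed.

Lemma U_rd_ge0 : 0 <= U_rd.
Proof.
  destruct (is_lim_RInt_gamma_pdf_cdf_affine mrd msd trd tsd al_rd be_rd)
    as [J [[M HJ] HlimJ]]; auto.
  apply (is_lim_le_loc (fun _ => 0) J p_infty 0 U_rd); [|apply is_lim_const | auto].
  exists (Rmax 0 M). intros b Hb.
  pose proof (Rmax_l 0 M). pose proof (Rmax_r 0 M).
  apply (is_RInt_ge_0 _ 0 b _ ltac:(lra) (HJ b ltac:(lra))).
  intros x Hx. pose proof (gamma_pdf_ge0 mrd trd x trd_pos ltac:(lra)).
  pose proof (gamma_cdf_bounds msd tsd (al_rd * x - be_rd) hmsd tsd_pos). nra.
Qed.

Lemma P_EE_ge_LB : exists P, is_P_EE Ps Pr Cx r msr mrr mrd msd pisr pirr pird pisd P /\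
  P_EE_LB Ps Pr Cx r msr mrr mrd msd pisr pirr pird pisd <= P.
Proof.
  destruct ex_lim_RInt_no_outage_sr_dens as [I HI].
  exists (1 - U_rd * I). split.
  - exists outage_dens1. split; [apply ImprInt0_outage_dens1, HI|].
    intros x1 Hx1. exists (outage_dens2 x1). split; [apply ImprInt0_outage_dens2, Hx1|].
    intros x2 _. exists (outage_dens3 x1 x2). split; [apply ImprInt0_outage_dens3|].
    intros x3 Hx3. apply ImprInt0_outage_integrand, Hx3.
  - rewrite P_EE_LB_eq by auto.
    fold ps c2 tsr trr trd tsd al_rd be_rd al_sr be_sr U_rd U_sr.
    pose proof U_rd_ge0. pose proof (lim_RInt_no_outage_sr_dens_le I HI). nra.
Qed.

End Outage.

Theorem theorem3 (Ps : R) (msr mrr mrd msd : nat) (pisr pirr pird pisd : R)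
  (hPs : 0 < Ps)
  (hmsr : (1 <= msr)%nat) (hmrr : (1 <= mrr)%nat)
  (hmrd : (1 <= mrd)%nat) (hmsd : (1 <= msd)%nat)
  (hpisr : 0 < pisr) (hpirr : 0 < pirr) (hpird : 0 < pird) (hpisd : 0 < pisd)
  (r Pr Cx : R) (hr : 0 < r) (hPr : 0 < Pr) (hC0 : 0 <= Cx) (hC1 : Cx < 1) :
  exists P, is_P_EE Ps Pr Cx r msr mrr mrd msd pisr pirr pird pisd P /\
    P_EE_LB Ps Pr Cx r msr mrr mrd msd pisr pirr pird pisd <= P.
Proof. apply P_EE_ge_LB; assumption. Qed.
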